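(* Let $G$ be a $4$-regular graph on $n\ge 7$ vertices and let $G'$ be the labeled complete graph on $V(G)$ whose $+$ edges are exactly the edges of $G$ (all other pairs labeled $-$). Let $H$ be the labeled complete graph obtained from $G'$ by adding, for every $3$-set $\{u,v,w\}\subseteq V(G')$, a new set $C_{uvw}$ of $7$ vertices, where all edges within $C_{uvw}$ are $+$, all edges from $C_{uvw}$ to $u,v,w$ are $+$, and all other edges incident to $C_{uvw}$ are $-$ (edges among vertices of $G'$ keep their labels from $G'$). Assign tolerance $t_u=7\left(\binom{n-1}{2}-1\right)+2$ to each $u\in V(G')$ and $t_v=3$ to each $v\in V(H)\setminus V(G')$. If $H$ has a clustering in which every vertex $v$ has at most $t_v$ incident errors, then every cluster of that clustering contains at most three vertices of $G'$, and every cluster contains vertices from exactly one of the sets $C_{uvw}$.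
   Context: A clustering is a partition of the vertex set. An error at a vertex $v$ is an incident edge that is a $+$ edge between different clusters or a $-$ edge within a cluster. *)

From mathcomp Require Import all_boot.
Set Implicit Arguments. Unset Strict Implicit. Unset Printing Implicit Defensive.

Section Construction.
Variable V : finType.

Definition triple := {S : {set V} | #|S| == 3}.

(* vertex set of H: V(G') plus, for each 3-set S, the 7 vertices of C_S *)
Definition Hvert := (V + (triple * 'I_7))%type.

Definition Hplus (e : rel V) (x y : Hvert) : bool :=
  match x, y with
  | inl a, inl b => (a != b) && e a b
  | inl a, inr (s, _) => a \in val s
  | inr (s, _), inl a => a \in val s
  | inr (s, i), inr (t, j) => (s == t) && (i != j)
  end.

Definition Hminus (e : rel V) (x y : Hvert) : bool :=
  (x != y) && ~~ Hplus e x y.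

Definition errors (e : rel V) (P : {set {set Hvert}}) (x : Hvert) : nat :=
  #|[set y | (Hplus e x y && (y \notin pblock P x))
           || (Hminus e x y && (y \in pblock P x))]|.

Definition tol (x : Hvert) : nat :=
  match x with
  | inl _ => 7 * ('C(#|V|.-1, 2) - 1) + 2
  | inr _ => 3
  end.

End Construction.

Definition simple_graph (V : finType) (e : rel V) :=
  irreflexive e /\ symmetric e.
Definition regular (V : finType) (e : rel V) (k : nat) :=
  forall v, #|[set w | e v w]| = k.

From mathcomp Require Import all_boot.
From mathcomp Require Import zify.

Set Implicit Arguments.
Unset Strict Implicit.
Unset Printing Implicit Defensive.

(* A vertex of C_S has six + neighbours inside C_S and tolerance 3, so its
   cluster contains at least four vertices of C_S; two such clusters would
   need eight vertices, hence C_S lies in a single cluster.  Any vertex of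
   another C_T in that cluster would then bring all seven vertices of C_T,
   i.e. seven - errors.  A vertex u of G' has 7 * C(n-1,2) + neighbours in
   the sets C_S with u in S; its tolerance is smaller, so its cluster meets
   some such C_S.  Hence every cluster meets exactly one C_S, and all its
   vertices of G' lie in that 3-set S. *)

Definition clique_vertex (V : finType) (S : triple V) (k : 'I_7) : Hvert V :=
  inr (S, k).

Lemma clique_vertex_inj (V : finType) (S : triple V) : injective (clique_vertex S).
Proof. by move=> i j [->]. Qed.

Lemma errors_ge_card (V : finType) (e : rel V) (P : {set {set Hvert V}})
    (x : Hvert V) (Y : {set Hvert V}) :
  (forall y, y \in Y ->
     (Hplus e x y && (y \notin pblock P x)) || (Hminus e x y && (y \in pblock P x))) ->
  #|Y| <= errors e P x.
Proof.
by move=> HY; apply/subset_leq_card/subsetP => y /HY; rewrite inE.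
Qed.

Lemma binom_le_card_triples (V : finType) (u : V) :
  'C(#|V|.-1, 2) <= #|[set S : triple V | u \in val S]|.
Proof.
pose pairs := [set A : {set V} | A \subset [set~ u] & #|A| == 2].
have notin_pairs A : A \in pairs -> u \notin A.
  by rewrite inE => /andP [/subsetP sAu _]; apply/negP => /sAu; rewrite !inE eqxx.
have <- : #|pairs| = 'C(#|V|.-1, 2) by rewrite cards_draws cardsC1.
rewrite -(@card_in_imset _ _ (fun A => u |: A)); last first.
  by move=> A B /notin_pairs uA /notin_pairs uB eqAB; rewrite -(setU1K uA) eqAB setU1K.
rewrite -[X in _ <= X](card_imset _ val_inj).
apply: subset_leq_card; apply/subsetP => _ /imsetP [A pA ->].
have A3 : #|u |: A| == 3.
  by move: (pA); rewrite cardsU1 (negbTE (notin_pairs A pA)) inE => /andP [_ /eqP ->].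
by apply/imsetP; exists (exist _ (u |: A) A3 : triple V); rewrite // inE setU11.
Qed.

Section Clustering.
Variables (V : finType) (e : rel V) (P : {set {set Hvert V}}).
Hypothesis trivP : trivIset P.
Hypothesis coverP : forall x, x \in cover P.
Hypothesis tolP : forall x : Hvert V, errors e P x <= tol x.

Local Notation cluster := (pblock P).

Lemma clique_cluster_large (S : triple V) (i : 'I_7) :
  4 <= #|[set k | clique_vertex S k \in cluster (clique_vertex S i)]|.
Proof.
set A := [set k | _].
suff : #|~: A| <= 3 by have := cardsC A; rewrite card_ord; lia.
apply: leq_trans (tolP (clique_vertex S i)).
rewrite -(card_imset _ (@clique_vertex_inj _ S)).
apply: errors_ge_card => _ /imsetP [k kA ->].
move: kA; rewrite !inE => kA; rewrite /= eqxx kA andbT; apply/orP; left.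
by apply: contraNneq kA => <-; rewrite mem_pblock coverP.
Qed.

Lemma clique_cluster_eq (S : triple V) (i j : 'I_7) :
  cluster (clique_vertex S i) = cluster (clique_vertex S j).
Proof.
apply/eqP; apply: contraT => neq_ij.
pose A i := [set k | clique_vertex S k \in cluster (clique_vertex S i)].
have Ai : 4 <= #|A i| := clique_cluster_large S i.
have Aj : 4 <= #|A j| := clique_cluster_large S j.
have disjA : A i :&: A j = set0.
  apply/setP => k; rewrite !inE; apply/negP => /andP [ki kj].
  by move/eqP: neq_ij; apply; rewrite -(same_pblock trivP ki) (same_pblock trivP kj).
have := cardsUI (A i) (A j); rewrite disjA cards0.
have := max_card (A i :|: A j); rewrite card_ord; lia.
Qed.

Lemma clique_cluster_unique (S T : triple V) (i j : 'I_7) :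
  clique_vertex T j \in cluster (clique_vertex S i) -> T = S.
Proof.
move=> Tj_in; apply/eqP; apply: contraT => neq_TS.
have T_in k : clique_vertex T k \in cluster (clique_vertex S i).
  by rewrite -(same_pblock trivP Tj_in) (clique_cluster_eq T j k) mem_pblock coverP.
suff : 7 <= errors e P (clique_vertex S i) by have := tolP (clique_vertex S i); rewrite /=; lia.
rewrite -{1}(card_ord 7) -cardsT -(card_imset _ (@clique_vertex_inj _ T)).
apply: errors_ge_card => _ /imsetP [k _ ->].
rewrite T_in /Hminus /= andbF andbT (eq_sym S T) (negbTE neq_TS) /= andbT.
by apply: contraNneq neq_TS => -[->].
Qed.

Lemma vertex_cluster_meets_clique (u : V) : 3 <= #|V| ->
  exists (S : triple V) (i : 'I_7),
    u \in val S /\ clique_vertex S i \in cluster (inl u).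
Proof.
move=> V3.
suff /existsP [[S i] /andP [uS Si_u]] :
    [exists p : triple V * 'I_7, (u \in val p.1) && (inr p \in cluster (inl u))].
  by exists S, i.
apply: contraT; rewrite negb_exists => /forallP none.
pose Tu := [set S : triple V | u \in val S].
have : #|[set (inr p : Hvert V) | p in setX Tu [set: 'I_7]]| <= errors e P (inl u).
  apply: errors_ge_card => _ /imsetP [[S k] + ->]; rewrite !inE /= andbT => uS.
  by move: (none (S, k)); rewrite /= uS /= => ->.
rewrite card_imset; last by move=> p q [].
rewrite cardsX cardsT card_ord.
have := tolP (inl u); have := binom_le_card_triples u.
have : 0 < 'C(#|V|.-1, 2) by rewrite bin_gt0; lia.
rewrite /Tu /tol; lia.
Qed.

End Clustering.

Theorem lemma2 (V : finType) (e : rel V) :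
  simple_graph e -> regular e 4 -> 7 <= #|V| ->
  forall P : {set {set Hvert V}},
    partition P [set: Hvert V] ->
    (forall x : Hvert V, errors e P x <= tol x) ->
    forall B, B \in P ->
      #|[set a : V | inl a \in B]| <= 3 /\
      exists S : triple V,
        (exists i, inr (S, i) \in B) /\
        (forall T : triple V, (exists j, inr (T, j) \in B) -> T = S).
Proof.
move=> _ _ V7 P /and3P [/eqP coverP trivP noset0] tolP B PB.
have {}coverP x : x \in cover P by rewrite coverP inE.
have V3 : 3 <= #|V| by apply: leq_trans V7.
have clusterB x : x \in B -> pblock P x = B by apply: def_pblock.
have [S [i S_B]] : exists S i, clique_vertex S i \in B.
  have /set0Pn [[u|[S i]] xB] : B != set0 by apply: contraNneq noset0 => <-.
    have [S [i [_ Si_u]]] := vertex_cluster_meets_clique trivP tolP u V3.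
    by exists S, i; rewrite -(clusterB _ xB).
  by exists S, i.
have uniqS T : (exists j, inr (T, j) \in B) -> T = S.
  case=> j Tj; apply: (clique_cluster_unique trivP coverP tolP (i := i) (j := j)).
  by rewrite clusterB.
split; last by exists S; split; [exists i|].
rewrite -[X in _ <= X](eqP (valP S)); apply/subset_leq_card/subsetP => a; rewrite inE => aB.
have [T [k [aT Tk_a]]] := vertex_cluster_meets_clique trivP tolP a V3.
by rewrite -(uniqS T); last by exists k; rewrite -(clusterB _ aB).
Qed.
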